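(* Let $A_1,\dots,A_N$ be $n\times n$ nonnegative matrices that commute pairwise in the max algebra (i.e. $A_r\otimes A_s=A_s\otimes A_r$ for all $r,s$), with $\mu(A_i)\le 1$ for every $1\le i\le N$. Let $p\in\mathbb{N}$ and let $\omega=(\omega_1\,\omega_2\cdots\omega_p)\in\Sigma_N^p$ be a $p$-lettered word in which the letter $i$ occurs $p_i$ times, and let $A_\omega=A_{\omega_p}\otimes A_{\omega_{p-1}}\otimes\cdots\otimes A_{\omega_1}$. Then there exists a positive integer $q$ such that for every $1\le j\le q$ and every $i$, the limit $\widetilde{A_i^{(j)}}:=\lim_{k\to\infty}A_i^{kq+j}$ exists, and \[ \lim_{k\to\infty} A_\omega^{kq+j} \;=\; \bigotimes_{i=1}^{N}\left(\widetilde{A_i^{(j)}}\right)^{p_i}. \]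
   Context: Max algebra: on $\mathbb{R}_+=[0,\infty)$, $a\oplus b=\max\{a,b\}$, $a\otimes b=ab$; for nonnegative matrices $(A\otimes B)_{ij}=\max_k a_{ik}b_{kj}$, and all matrix powers and products are taken with respect to $\otimes$ (with $A^0=I$). Limits are entrywise. $\mu(A)$ denotes the maximum circuit geometric mean of $A$: in the digraph with an edge $i\to j$ of weight $a_{ij}$ whenever $a_{ij}>0$, the circuit geometric mean of a simple circuit $(i_1,i_2),\dots,(i_\ell,i_1)$ is $(a_{i_1i_2}\cdots a_{i_\ell i_1})^{1/\ell}$, and $\mu(A)$ is the maximum of these. $\Sigma_N^p=\{(\omega_1\cdots\omega_p):1\le\omega_i\le N\}$ is the set of $p$-lettered words on $\{1,\dots,N\}$. *)

From HB Require Import structures.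
From mathcomp Require Import all_boot all_order all_algebra.
From mathcomp Require Import all_classical all_reals all_analysis.
Set Implicit Arguments. Unset Strict Implicit. Unset Printing Implicit Defensive.
Import Order.TTheory GRing.Theory Num.Theory.
Local Open Scope ring_scope.
Local Open Scope classical_set_scope.
Import numFieldNormedType.Exports.

Section MaxAlg.
Variable R : realType.

(* max-times product: (A (x) B)_ij = max_k a_ik b_kj (entries are nonnegative,
   so 0 is the neutral element of max) *)
Definition maxmul n (A B : 'M[R]_n) : 'M[R]_n :=
  \matrix_(i, j) \big[Num.max/0]_(k < n) (A i k * B k j).

Definition maxpow n (A : 'M[R]_n) (k : nat) : 'M[R]_n :=
  iter k (maxmul A) 1%:M.

Definition maxprod_seq n (s : seq 'M[R]_n) : 'M[R]_n :=
  foldr (@maxmul n) 1%:M s.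

(* A_omega = A_{w_p} (x) ... (x) A_{w_1} for the word w = [:: w_1; ...; w_p] *)
Definition word_mat n N (A : 'I_N -> 'M[R]_n) (w : seq 'I_N) : 'M[R]_n :=
  foldl (fun M i => maxmul (A i) M) 1%:M w.

(* weight product of the closed walk t_0 -> t_1 -> ... -> t_l -> t_0 *)
Definition circ_weight n l (A : 'M[R]_n) (t : l.+1.-tuple 'I_n) : R :=
  \prod_(k < l.+1) A (tnth t k) (tnth t (inord ((k.+1) %% l.+1))).

Definition simple_circuit n l (A : 'M[R]_n) (t : l.+1.-tuple 'I_n) : bool :=
  uniq t && [forall k : 'I_l.+1, 0 < A (tnth t k) (tnth t (inord ((k.+1) %% l.+1)))].

Definition mu n (A : 'M[R]_n) : R :=
  \big[Num.max/0]_(l < n)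
    \big[Num.max/0]_(t : l.+1.-tuple 'I_n | simple_circuit A t)
       powR (circ_weight A t) (l.+1%:R^-1).

Definition mx_cvg n (u : nat -> 'M[R]_n) (L : 'M[R]_n) : Prop :=
  forall a b : 'I_n, ((fun k => u k a b) @ \oo --> L a b)%classic.

End MaxAlg.

(* (A^m)_ab is the largest weight of a walk of length m from a to b.  Since
   mu(A) <= 1, cutting closed walks into simple circuits shows that they all
   have weight at most 1.  Call c critical if some closed walk through c has
   weight 1; then (A^(n!))_cc = 1.  For m = k n! + j, the best walk a -> b
   either visits a critical node c -- and the best such weights are
   nondecreasing in k (insert the weight-1 loop of length n! at c) and
   bounded -- or avoids all critical nodes, where every short circuit has
   weight at most some gamma < 1, so its weight is O(gamma^k).  For a commuting family, A_omega^m is the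
   max-product of the (A_i^m)^(p_i), and the max-product is continuous. *)

From mathcomp Require Import all_boot all_order all_algebra.
From mathcomp Require Import all_classical all_reals all_analysis.
From mathcomp Require Import zify.

Import Order.TTheory GRing.Theory Num.Theory.
Import numFieldNormedType.Exports.
Local Open Scope ring_scope.

Arguments maxmul : simpl never.
Arguments maxpow : simpl never.

Lemma mulr_bigmaxr {R : numDomainType} (I : Type) (r : seq I) (F : I -> R) x :
  0 <= x ->
  x * \big[Num.max/0]_(i <- r) F i = \big[Num.max/0]_(i <- r) (x * F i).
Proof.
move=> x_ge0; apply: (big_morph (fun y => x * y)) => [y z|]; last exact: mulr0.
exact: maxr_pMr.
Qed.

Lemma mulr_bigmaxl {R : numDomainType} (I : Type) (r : seq I) (F : I -> R) x :
  0 <= x ->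
  (\big[Num.max/0]_(i <- r) F i) * x = \big[Num.max/0]_(i <- r) (F i * x).
Proof.
move=> x_ge0; apply: (big_morph (fun y => y * x)) => [y z|]; last exact: mul0r.
exact: maxr_pMl.
Qed.

Section MaxProduct.
Context {R : realType} {n : nat}.
Implicit Types (X Y Z : 'M[R]_n) (a b c : 'I_n).

Definition nonneg_mx X := forall a b, 0 <= X a b.

Definition maxcomm X Y := maxmul X Y = maxmul Y X.

Lemma maxmulE X Y a b : maxmul X Y a b = \big[Num.max/0]_k (X a k * Y k b).
Proof. by rewrite mxE. Qed.

Lemma maxpow0 X : maxpow X 0 = 1%:M.
Proof. by []. Qed.

Lemma maxpowS X m : maxpow X m.+1 = maxmul X (maxpow X m).
Proof. by []. Qed.

Lemma nonneg_mx1 : nonneg_mx 1%:M.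
Proof. by move=> a b; rewrite mxE ler0n. Qed.

Lemma maxmul_nonneg X Y : nonneg_mx (maxmul X Y).
Proof. by move=> a b; rewrite maxmulE bigmax_ge_id. Qed.

Lemma maxpow_nonneg X m : nonneg_mx (maxpow X m).
Proof. by case: m => [|m]; [exact: nonneg_mx1 | exact: maxmul_nonneg]. Qed.

Lemma maxprod_seq_nonneg s : nonneg_mx (maxprod_seq s).
Proof. by case: s => [|X s]; [exact: nonneg_mx1 | exact: maxmul_nonneg]. Qed.

End MaxProduct.

#[local] Hint Resolve nonneg_mx1 maxmul_nonneg maxpow_nonneg maxprod_seq_nonneg : core.

Section MaxAlgebraLaws.
Context {R : realType} {n : nat}.
Implicit Types (X Y Z : 'M[R]_n) (a b c : 'I_n).

Lemma maxmulA X Y Z : nonneg_mx X -> nonneg_mx Z ->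
  maxmul (maxmul X Y) Z = maxmul X (maxmul Y Z).
Proof.
move=> X_ge0 Z_ge0; apply/matrixP => a b; rewrite !maxmulE.
under eq_bigr => l _ do rewrite maxmulE mulr_bigmaxl //.
under [RHS]eq_bigr => k _ do rewrite maxmulE mulr_bigmaxr //.
rewrite (exchange_big_idem (maxxx 0)); apply: eq_bigr => k _.
by apply: eq_bigr => l _; rewrite mulrA.
Qed.

Lemma maxmul1mx X : nonneg_mx X -> maxmul 1%:M X = X.
Proof.
move=> X_ge0; apply/matrixP => a b; rewrite maxmulE (bigD1 a) //= mxE eqxx mul1r.
apply/max_idPl/bigmax_le => // k; rewrite mxE eq_sym => /negbTE->.
by rewrite mul0r.
Qed.

Lemma maxmulmx1 X : nonneg_mx X -> maxmul X 1%:M = X.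
Proof.
move=> X_ge0; apply/matrixP => a b; rewrite maxmulE (bigD1 b) //= mxE eqxx mulr1.
apply/max_idPl/bigmax_le => // k; rewrite mxE => /negbTE->.
by rewrite mulr0.
Qed.

Lemma maxpowD X k l : nonneg_mx X ->
  maxpow X (k + l) = maxmul (maxpow X k) (maxpow X l).
Proof.
move=> X_ge0; elim: k => [|k IH]; first by rewrite maxmul1mx.
by rewrite addSn maxpowS IH -maxmulA.
Qed.

Lemma maxpowM X k l : nonneg_mx X -> maxpow X (k * l) = maxpow (maxpow X k) l.
Proof.
by move=> X_ge0; elim: l => [|l IH]; rewrite ?muln0 // mulnS maxpowD // IH.
Qed.

Lemma maxpowD_ge X k l a c b : nonneg_mx X ->
  maxpow X k a c * maxpow X l c b <= maxpow X (k + l) a b.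
Proof. by move=> X_ge0; rewrite maxpowD // maxmulE (le_bigmax _ _ c). Qed.

Lemma le_maxpow X Y m a b : nonneg_mx X -> (forall a b, X a b <= Y a b) ->
  maxpow X m a b <= maxpow Y m a b.
Proof.
move=> X_ge0 le_XY; elim: m a b => [|m IH] a b; first by rewrite !maxpow0.
rewrite !maxpowS !maxmulE; apply: le_bigmax2 => k _.
by apply: ler_pM; rewrite ?X_ge0 ?maxpow_nonneg ?le_XY ?IH.
Qed.

Lemma maxcomm_maxpowl X Y k : nonneg_mx X -> nonneg_mx Y -> maxcomm X Y ->
  maxcomm (maxpow X k) Y.
Proof.
rewrite /maxcomm => X_ge0 Y_ge0 XY; elim: k => [|k IH].
  by rewrite maxmul1mx ?maxmulmx1.
by rewrite maxpowS maxmulA // IH -maxmulA // XY maxmulA.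
Qed.

Lemma maxcomm_maxpow X Y k l : nonneg_mx X -> nonneg_mx Y -> maxcomm X Y ->
  maxcomm (maxpow X k) (maxpow Y l).
Proof.
move=> X_ge0 Y_ge0 XY; apply/esym/maxcomm_maxpowl => //.
exact/esym/maxcomm_maxpowl.
Qed.

Lemma maxpow_maxmul X Y m : nonneg_mx X -> nonneg_mx Y -> maxcomm X Y ->
  maxpow (maxmul X Y) m = maxmul (maxpow X m) (maxpow Y m).
Proof.
move=> X_ge0 Y_ge0 XY; elim: m => [|m IH]; first by rewrite maxmul1mx.
have XmY : maxcomm (maxpow X m) Y by exact: maxcomm_maxpowl.
by rewrite maxpowS IH maxmulA // -(maxmulA Y) // -XmY maxmulA // -maxmulA.
Qed.

Lemma maxcomm_maxprod_seq X s : nonneg_mx X -> {in s, forall Y, nonneg_mx Y} ->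
  {in s, forall Y, maxcomm X Y} -> maxcomm X (maxprod_seq s).
Proof.
move=> X_ge0; elim: s => [|Y s IH] s_ge0 Xs /=.
  by rewrite /maxcomm maxmulmx1 ?maxmul1mx.
have sub_s Z : Z \in s -> Z \in Y :: s by rewrite inE => ->; rewrite orbT.
have Y_ge0 := s_ge0 Y (mem_head Y s).
have XP : maxcomm X (maxprod_seq s).
  by apply: IH => Z /sub_s; [exact: s_ge0 | exact: Xs].
by rewrite /maxcomm -maxmulA // Xs ?mem_head // maxmulA // XP maxmulA.
Qed.

Lemma maxpow_maxprod_seq s m : {in s, forall X, nonneg_mx X} ->
  {in s &, forall X Y, maxcomm X Y} ->
  maxpow (maxprod_seq s) m = maxprod_seq [seq maxpow X m | X <- s].
Proof.
elim: s => [|X s IH] s_ge0 s_comm /=.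
  by elim: m => [|m IH] //; rewrite maxpowS IH maxmul1mx.
have sub_s Y : Y \in s -> Y \in X :: s by rewrite inE => ->; rewrite orbT.
have X_ge0 := s_ge0 X (mem_head X s).
have s'_ge0 : {in s, forall Y, nonneg_mx Y} by move=> Y /sub_s/s_ge0.
rewrite maxpow_maxmul ?IH //.
- by move=> Y Z /sub_s Ys /sub_s Zs; apply: s_comm.
- by apply: maxcomm_maxprod_seq => // Y /sub_s; apply: s_comm; apply: mem_head.
Qed.

End MaxAlgebraLaws.

Section Walks.
Context {R : realType} {n : nat}.
Variable X : 'M[R]_n.
Hypothesis X_ge0 : nonneg_mx X.

Fixpoint walk_weight (x : 'I_n) (s : seq 'I_n) : R :=
  if s is y :: s' then X x y * walk_weight y s' else 1.

Lemma walk_weight_cat x s1 s2 :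
  walk_weight x (s1 ++ s2) = walk_weight x s1 * walk_weight (last x s1) s2.
Proof. by elim: s1 x => [|y s IH] x /=; rewrite ?mul1r // IH mulrA. Qed.

Lemma walk_weight_ge0 x s : 0 <= walk_weight x s.
Proof. by elim: s x => [|y s IH] x //=; rewrite mulr_ge0. Qed.

Lemma walk_weight_excise x s1 s2 s3 : last (last x s1) s2 = last x s1 ->
  walk_weight x (s1 ++ s2 ++ s3) =
  walk_weight (last x s1) s2 * walk_weight x (s1 ++ s3).
Proof. by move=> s2_closed; rewrite !walk_weight_cat s2_closed mulrCA. Qed.

Lemma walk_weight_le_maxpow x s :
  walk_weight x s <= maxpow X (size s) x (last x s).
Proof.
elim: s x => [|y s IH] x /=; first by rewrite maxpow0 mxE eqxx.
rewrite maxpowS maxmulE (le_trans _ (le_bigmax _ _ y)) //.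
by rewrite ler_wpM2l.
Qed.

Lemma walk_weight_prod x s z :
  walk_weight x s = \prod_(k < size s) X (nth z (x :: s) k) (nth z (x :: s) k.+1).
Proof. by elim: s x => [|y s IH] x; rewrite ?big_ord0 // big_ord_recl /= IH. Qed.

Lemma walk_weight_cycle x s :
  walk_weight x (rcons s x) = circ_weight X (in_tuple (x :: s)).
Proof.
rewrite (walk_weight_prod _ _ x) size_rcons /circ_weight; apply: eq_bigr => k _.
rewrite !(tnth_nth x) -rcons_cons !nth_rcons inordK ?ltn_pmod //= ltn_ord.
have [k_lt|s_le_k] := ltnP k (size s); first by rewrite modn_small ltnS k_lt.
have /eqP-> : k == size s :> nat by rewrite eqn_leq s_le_k -ltnS ltn_ord.
by rewrite ltnn eqxx modnn.
Qed.

Lemma maxpow_walk m a b : maxpow X m a b = 0 \/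
  exists s, [/\ size s = m, last a s = b & walk_weight a s = maxpow X m a b].
Proof.
elim: m a => [|m IH] a.
  rewrite maxpow0 mxE; case: eqVneq => [<-|_]; last by left.
  by right; exists [::].
rewrite maxpowS maxmulE.
have /(eq_bigmax a predT _ isT) [k _ ->] :
    forall k, predT k -> 0 <= X a k * maxpow X m k b.
  by move=> k _; rewrite mulr_ge0 ?X_ge0 ?maxpow_nonneg.
have [->|[s [<- sb <-]]] := IH k; first by left; rewrite mulr0.
by right; exists (k :: s).
Qed.

End Walks.

Lemma closed_subwalk {T : eqType} (x : T) s : ~~ uniq (x :: s) ->
  exists s1 s2 s3, [/\ s = s1 ++ s2 ++ s3, last (last x s1) s2 = last x s1
                     & s2 != [::]].
Proof.
elim: s x => [|y s IH] x //=; rewrite negb_and negbK => /orP [x_ys | /IH].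
  case/splitPr: x_ys => s1 s2.
  by exists [::], (rcons s1 x), s2; rewrite cat_rcons last_rcons -size_eq0 size_rcons.
by move=> [s1 [s2 [s3 [-> closed nonnil]]]]; exists (y :: s1), s2, s3.
Qed.

Lemma short_closed_subwalk {n} (x : 'I_n) (s : seq 'I_n) : (n <= size s)%N ->
  exists s1 s2 s3, [/\ s = s1 ++ s2 ++ s3, last (last x s1) s2 = last x s1
                     & (0 < size s2 <= n)%N].
Proof.
move=> n_le_s.
have : ~~ uniq (x :: take n s).
  apply: contraL (max_card (mem (x :: take n s))) => /card_uniqP->.
  by rewrite card_ord /= size_takel // ltnn.
move=> /closed_subwalk [s1 [s2 [s3 [take_s closed nonnil]]]].
exists s1, s2, (s3 ++ drop n s); split => //.
  by rewrite -{1}(cat_take_drop n s) take_s -!catA.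
have : (size (take n s) <= n)%N by rewrite size_takel.
by rewrite take_s !size_cat lt0n size_eq0 nonnil; lia.
Qed.

Section Decay.
Context {R : realType} {n : nat}.
Variables (X : 'M[R]_n) (g : R).
Hypotheses (X_ge0 : nonneg_mx X) (g_ge0 : 0 <= g) (g_le1 : g <= 1).
Hypothesis short_cycles_le : forall u d, (0 < d <= n)%N -> maxpow X d u u <= g.

Lemma maxpow_drop_cycle m a b : (n <= m)%N ->
  exists d, [/\ (0 < d)%N, (d <= n)%N & maxpow X m a b <= g * maxpow X (m - d) a b].
Proof.
move=> n_le_m.
have [->|[s [size_s last_s <-]]] := maxpow_walk X X_ge0 m a b.
  have n_gt0 : (0 < n)%N by apply: leq_ltn_trans (ltn_ord a).
  by exists n; rewrite n_gt0 leqnn mulr_ge0 ?maxpow_nonneg.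
have n_le_s : (n <= size s)%N by rewrite size_s.
have [s1 [s2 [s3 [s_eq closed size_s2]]]] := short_closed_subwalk a s n_le_s.
move: size_s2 => /andP[s2_gt0 s2_le].
exists (size s2); split => //.
rewrite s_eq walk_weight_excise // ler_pM ?walk_weight_ge0 //.
  apply: le_trans (walk_weight_le_maxpow X X_ge0 _ _) _.
  by rewrite closed short_cycles_le ?s2_gt0.
have := walk_weight_le_maxpow X X_ge0 a (s1 ++ s3).
rewrite -size_s -last_s s_eq !size_cat !last_cat closed.
by congr (_ <= maxpow _ _ _ _); lia.
Qed.

Definition maxpow_sup :=
  \big[Num.max/0]_(m < n) \big[Num.max/0]_a \big[Num.max/0]_b maxpow X m a b.

Lemma maxpow_decay t m a b : (t * n <= m)%N -> maxpow X m a b <= maxpow_sup * g ^+ t.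
Proof.
elim/ltn_ind: m t a b => m IH t a b tn_le_m.
have [m_lt_n|n_le_m] := ltnP m n.
  have -> : t = 0%N by move: tn_le_m m_lt_n; case: t; lia.
  rewrite expr0 mulr1 (le_trans _ (le_bigmax _ _ (Ordinal m_lt_n))) //=.
  by rewrite (le_trans _ (le_bigmax _ _ a)) //= (le_trans _ (le_bigmax _ _ b)).
have [d [d_gt0 d_le_n drop_le]] := maxpow_drop_cycle m a b n_le_m.
have IHd : maxpow X (m - d) a b <= maxpow_sup * g ^+ t.-1.
  by apply: IH; lia.
apply: le_trans drop_le (le_trans (ler_wpM2l g_ge0 IHd) _).
rewrite mulrCA ler_wpM2l ?bigmax_ge_id //.
by case: (t) => [|t']; rewrite ?expr0 ?mulr1 ?exprS.
Qed.

End Decay.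

Section CircuitBound.
Context {R : realType} {n : nat}.
Variable A : 'M[R]_n.
Hypotheses (A_ge0 : nonneg_mx A) (A_mu : mu A <= 1).

Lemma circ_weight_ge0 {l} (t : l.+1.-tuple 'I_n) : 0 <= circ_weight A t.
Proof. by apply: prodr_ge0 => k _; apply: A_ge0. Qed.

Lemma circ_mean_le_mu {l} (t : l.+1.-tuple 'I_n) :
  simple_circuit A t -> powR (circ_weight A t) l.+1%:R^-1 <= mu A.
Proof.
move=> t_circ; have /card_uniqP card_t : uniq t by case/andP: t_circ.
have := max_card (mem t); rewrite card_t size_tuple card_ord => l_lt_n.
rewrite /mu (le_trans _ (le_bigmax _ _ (Ordinal l_lt_n))) //=.
exact: bigmax_sup t_circ (lexx _).
Qed.

Lemma circ_weight_le1 {l} (t : l.+1.-tuple 'I_n) : uniq t -> circ_weight A t <= 1.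
Proof.
move=> t_uniq; have [t_circ|] := boolP (simple_circuit A t); last first.
  rewrite /simple_circuit t_uniq /= negb_forall => /existsP [k].
  rewrite -leNgt => edge_le0; rewrite /circ_weight (bigD1 k) //=.
  by rewrite (_ : A _ _ = 0) ?mul0r //; apply/le_anti; rewrite edge_le0 A_ge0.
have mean_le1 := le_trans (circ_mean_le_mu t t_circ) A_mu.
have -> : circ_weight A t = (powR (circ_weight A t) l.+1%:R^-1) `^ l.+1%:R.
  by rewrite -powRrM mulVf // powRr1 // circ_weight_ge0.
have mean_ge0 : powR (circ_weight A t) l.+1%:R^-1 \is Num.nneg.
  by rewrite nnegrE powR_ge0.
by have := ge0_ler_powR (ler0n R l.+1) mean_ge0 (rpred1 _) mean_le1; rewrite /= powR1.
Qed.

Lemma closed_walk_weight_le1 x s : last x s = x -> walk_weight A x s <= 1.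
Proof.
have [k] := ubnP (size s); elim: k x s => // k IH x s size_lt.
case/lastP: s size_lt => [//|s z]; rewrite size_rcons ltnS last_rcons => size_le ->.
have [x_s_uniq|] := boolP (uniq (x :: s)).
  by rewrite walk_weight_cycle circ_weight_le1.
move=> /closed_subwalk [s1 [s2 [s3 [s_eq closed nonnil]]]].
have s2_gt0 : (0 < size s2)%N by rewrite lt0n size_eq0.
move: size_le; rewrite s_eq !size_cat => size_le.
rewrite !rcons_cat walk_weight_excise // mulr_ile1 ?walk_weight_ge0 //.
  by apply: IH closed; lia.
apply: IH; rewrite ?last_cat ?last_rcons // size_cat size_rcons.
by move: size_le s2_gt0; move: (size s1) (size s2) (size s3); lia.
Qed.

Lemma maxpow_diag_le1 m u : maxpow A m u u <= 1.
Proof.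
have [->|[s [_ closed <-]]] := maxpow_walk A A_ge0 m u u; first exact: ler01.
exact: closed_walk_weight_le1.
Qed.

Lemma maxpow_bounded m a b : maxpow A m a b <= maxpow_sup A.
Proof.
have cycles_le1 u d : (0 < d <= n)%N -> maxpow A d u u <= 1.
  by move=> _; exact: maxpow_diag_le1.
have := maxpow_decay A 1 A_ge0 ler01 (lexx 1) cycles_le1 0 m a b.
by rewrite expr0 mulr1; apply.
Qed.

End CircuitBound.

Section CriticalNodes.
Context {R : realType} {n : nat}.
Variable A : 'M[R]_n.
Hypotheses (A_ge0 : nonneg_mx A) (A_mu : mu A <= 1).

Definition critical c := [exists d : 'I_n, maxpow A d.+1 c c == 1].

Lemma maxpow_fact_critical c : critical c -> maxpow A n`! c c = 1.
Proof.
case/existsP => d /eqP cycle1; apply/le_anti; rewrite maxpow_diag_le1 //=.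
have /dvdnP [e ->] : (d.+1 %| n`!)%N by rewrite dvdn_fact // ltn_ord.
elim: e => [|e IH]; first by rewrite mul0n maxpow0 mxE eqxx.
apply: le_trans (maxpowD_ge A d.+1 (e * d.+1) c c c A_ge0).
by rewrite cycle1 mul1r.
Qed.

Definition noncrit_mx : 'M[R]_n :=
  \matrix_(x, y) if critical x || critical y then 0 else A x y.

Lemma noncrit_mx_ge0 : nonneg_mx noncrit_mx.
Proof. by move=> x y; rewrite mxE; case: ifP. Qed.

Lemma noncrit_mx_le x y : noncrit_mx x y <= A x y.
Proof. by rewrite mxE; case: ifP. Qed.

Lemma walk_weight_noncrit x s : ~~ has critical (x :: s) ->
  walk_weight A x s = walk_weight noncrit_mx x s.
Proof.
elim: s x => [//|y s IH] x /=; rewrite negb_or => /andP [x_nc ys_nc].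
by rewrite IH // mxE (negbTE x_nc); case: (critical y) ys_nc.
Qed.

Definition noncrit_cycle_max :=
  \big[Num.max/0]_u \big[Num.max/0]_(d < n) maxpow noncrit_mx d.+1 u u.

Lemma noncrit_short_cycles_le u d : (0 < d <= n)%N ->
  maxpow noncrit_mx d u u <= noncrit_cycle_max.
Proof.
case: d => [//|d] /= d_lt; rewrite (le_trans _ (le_bigmax _ _ u)) //=.
exact: (le_bigmax _ _ (Ordinal d_lt)).
Qed.

Lemma noncrit_cycle_max_lt1 : noncrit_cycle_max < 1.
Proof.
apply: bigmax_lt => // u _; apply: bigmax_lt => // d _.
have le_A := le_maxpow noncrit_mx A d.+1 u u noncrit_mx_ge0 noncrit_mx_le.
have [u_crit|u_nc] := boolP (critical u).
  rewrite maxpowS maxmulE; apply: bigmax_lt => // k _.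
  by rewrite mxE u_crit mul0r.
rewrite lt_neqAle (le_trans le_A) ?maxpow_diag_le1 // andbT.
apply: contraNneq u_nc => cycle1; apply/existsP; exists d.
by rewrite eq_le maxpow_diag_le1 //= -cycle1.
Qed.

Section CriticalPart.
Variables a b : 'I_n.

Definition maxpow_via_crit m := \big[Num.max/0]_(c | critical c)
  \big[Num.max/0]_(s < m.+1) (maxpow A s a c * maxpow A (m - s) c b).

Lemma maxpow_via_crit_le m : maxpow_via_crit m <= maxpow A m a b.
Proof.
apply: bigmax_le => [|c _]; first exact: maxpow_nonneg.
apply: bigmax_le => [|s _]; first exact: maxpow_nonneg.
by have := maxpowD_ge A s (m - s) a c b A_ge0; rewrite subnKC // -ltnS.
Qed.

Lemma maxpow_via_crit_shift m : maxpow_via_crit m <= maxpow_via_crit (m + n`!).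
Proof.
apply: bigmax_le => [|c c_crit]; first exact: bigmax_ge_id.
apply: bigmax_le => [|s _]; first exact: bigmax_ge_id.
have s_lt : (s + n`! < (m + n`!).+1)%N by rewrite ltnS leq_add2r -ltnS.
apply: (bigmax_sup c) => //; apply: le_trans (le_bigmax _ _ (Ordinal s_lt)) => /=.
rewrite subnDr ler_wpM2r ?maxpow_nonneg //.
by have := maxpowD_ge A s n`! a c c A_ge0; rewrite maxpow_fact_critical // mulr1.
Qed.

Lemma maxpow_le_via_crit m :
  maxpow A m a b <= maxpow_via_crit m + maxpow noncrit_mx m a b.
Proof.
have crit_ge0 : 0 <= maxpow_via_crit m by exact: bigmax_ge_id.
have [->|[s [size_s last_s <-]]] := maxpow_walk A A_ge0 m a b.
  by rewrite addr_ge0 ?maxpow_nonneg.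
have [/hasP [c c_s c_crit]|s_nc] := boolP (has critical (a :: s)).
  have [s1 [s2 [s_eq c_eq]]] : exists s1 s2, s = s1 ++ s2 /\ last a s1 = c.
    move: c_s; rewrite inE => /predU1P [->|/splitPr [s1 s2]]; first by exists [::], s.
    by exists (rcons s1 c), s2; rewrite cat_rcons last_rcons.
  have s1_lt : (size s1 < m.+1)%N by rewrite -size_s s_eq size_cat ltnS leq_addr.
  apply: ler_wpDr; first exact: maxpow_nonneg.
  apply: (bigmax_sup c) => //; apply: le_trans (le_bigmax _ _ (Ordinal s1_lt)) => /=.
  rewrite s_eq walk_weight_cat c_eq ler_pM ?walk_weight_ge0 //.
    by rewrite -c_eq walk_weight_le_maxpow.
  have -> : (m - size s1 = size s2)%N by rewrite -size_s s_eq size_cat addKn.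
  by rewrite -last_s s_eq last_cat c_eq walk_weight_le_maxpow.
rewrite walk_weight_noncrit // ler_wpDl //.
by have := walk_weight_le_maxpow noncrit_mx noncrit_mx_ge0 a s; rewrite size_s last_s.
Qed.

End CriticalPart.

Lemma maxpow_fact_cvg j a b : cvgn (fun k => maxpow A (k * n`! + j) a b).
Proof.
pose u k := maxpow_via_crit a b (k * n`! + j).
pose w k := maxpow_sup noncrit_mx * noncrit_cycle_max ^+ k.
have u_incr : nondecreasing_seq u.
  apply/nondecreasing_seqP => k; rewrite /u mulSnr addnAC; exact: maxpow_via_crit_shift.
have u_bnd : has_ubound (range u).
  exists (maxpow_sup A) => _ [k _ <-].
  by apply: le_trans (maxpow_via_crit_le _ _ _) _; apply: maxpow_bounded.
have u_cvg := nondecreasing_cvgn u_incr u_bnd.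
have gamma_ge0 : 0 <= noncrit_cycle_max by exact: bigmax_ge_id.
have w_cvg : (w @ \oo --> 0)%classic.
  rewrite -(mulr0 (maxpow_sup noncrit_mx)); apply: cvgM; first exact: cvg_cst.
  by apply: cvg_expr; rewrite ger0_norm // noncrit_cycle_max_lt1.
have uw_cvg : ((u + w) @ \oo --> sup (range u))%classic.
  by rewrite -[sup _]addr0; exact: cvgD.
apply/cvg_ex; exists (sup (range u)); apply: (squeeze_cvgr _ u_cvg uw_cvg).
apply: nearW => k; rewrite maxpow_via_crit_le /=.
rewrite (le_trans (maxpow_le_via_crit _ _ _)) //.
rewrite lerD2l maxpow_decay ?(ltW noncrit_cycle_max_lt1) //.
- exact: noncrit_mx_ge0.
- exact: noncrit_short_cycles_le.
- by have := fact_geq n; nia.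
Qed.

End CriticalNodes.

Section CommutingFamily.
Context {R : realType} {n N : nat}.
Variable A : 'I_N -> 'M[R]_n.
Hypothesis A_ge0 : forall i, nonneg_mx (A i).
Hypothesis A_comm : forall i k, maxcomm (A i) (A k).
#[local] Hint Resolve A_ge0 : core.

Lemma maxmul_monomial s (c : 'I_N -> nat) x : uniq s -> x \in s ->
  maxmul (A x) (maxprod_seq [seq maxpow (A i) (c i) | i <- s]) =
  maxprod_seq [seq maxpow (A i) (c i + (i == x)) | i <- s].
Proof.
elim: s => [//|k s IH] /= /andP [k_s s_uniq]; rewrite inE.
have [-> _|x_k /= x_s] := eqVneq x k.
  rewrite /= addn1 -maxmulA // -maxpowS; congr (maxmul _ (maxprod_seq _)).
  apply/eq_in_map => i i_s; rewrite (_ : (i == k) = false) ?addn0 //.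
  by apply: contraNF k_s => /eqP <-.
rewrite addn0 -IH // -maxmulA //.
have Ax_Akc := maxcomm_maxpowl (A k) (A x) (c k) (A_ge0 k) (A_ge0 x) (A_comm k x).
by rewrite -Ax_Akc maxmulA.
Qed.

Lemma word_mat_count w :
  word_mat A w = maxprod_seq [seq maxpow (A i) (count_mem i w) | i <- enum 'I_N].
Proof.
elim/last_ind: w => [|w x IH].
  by rewrite /word_mat /=; elim: (enum 'I_N) => //= i s <-; rewrite maxmul1mx.
rewrite /word_mat foldl_rcons -/(word_mat A w) IH.
rewrite maxmul_monomial ?enum_uniq ?mem_enum //.
by congr maxprod_seq; apply: eq_map => i; rewrite -cats1 count_cat /= addn0 eq_sym.
Qed.

Lemma maxpow_word_mat w m : maxpow (word_mat A w) m =
  maxprod_seq [seq maxpow (maxpow (A i) m) (count_mem i w) | i <- enum 'I_N].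
Proof.
rewrite word_mat_count maxpow_maxprod_seq.
- rewrite -map_comp; congr maxprod_seq; apply: eq_map => i /=.
  by rewrite -!maxpowM // mulnC.
- by move=> _ /mapP [i _ ->].
- by move=> _ _ /mapP [i _ ->] /mapP [k _ ->]; apply: maxcomm_maxpow.
Qed.

End CommutingFamily.

Lemma cvg_bigmax {R : realType} {T : Type} {F : set_system T} {FF : Filter F}
    (I : Type) (r : seq I) (f : I -> T -> R) (L : I -> R) :
  (forall i, f i @ F --> L i)%classic ->
  ((fun x => \big[Num.max/0]_(i <- r) f i x) @ F -->
     \big[Num.max/0]_(i <- r) L i)%classic.
Proof.
move=> fL; elim: r => [|i r IH].
  by rewrite big_nil; under eq_fun do rewrite big_nil; exact: cvg_cst.
rewrite big_cons; under eq_fun do rewrite big_cons.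
apply: (continuous2_cvg _ _ (fL i) IH); exact: (@max_continuous _ R (_, _)).
Qed.

Section MatrixLimits.
Context {R : realType} {n : nat}.

Lemma mx_cvg_cst (M : 'M[R]_n) : mx_cvg (fun=> M) M.
Proof. by move=> a b; exact: cvg_cst. Qed.

Lemma mx_cvg_maxmul (u v : nat -> 'M[R]_n) U V : mx_cvg u U -> mx_cvg v V ->
  mx_cvg (fun k => maxmul (u k) (v k)) (maxmul U V).
Proof.
move=> uU vV a b; rewrite maxmulE; under eq_fun do rewrite maxmulE.
by apply: cvg_bigmax => c; apply: cvgM.
Qed.

Lemma mx_cvg_maxpow (u : nat -> 'M[R]_n) U m : mx_cvg u U ->
  mx_cvg (fun k => maxpow (u k) m) (maxpow U m).
Proof.
by move=> uU; elim: m => [|m IH]; [exact: mx_cvg_cst | exact: mx_cvg_maxmul].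
Qed.

Lemma mx_cvg_maxprod_seq (I : Type) (s : seq I) (u : I -> nat -> 'M[R]_n) U :
  (forall i, mx_cvg (u i) (U i)) ->
  mx_cvg (fun k => maxprod_seq [seq u i k | i <- s])
         (maxprod_seq [seq U i | i <- s]).
Proof.
by move=> uU; elim: s => [|i s IH]; [exact: mx_cvg_cst | exact: mx_cvg_maxmul].
Qed.

End MatrixLimits.

Theorem theorem3p2 (R : realType) (n N : nat) (A : 'I_N -> 'M[R]_n)
  (Anonneg : forall (i : 'I_N) (a b : 'I_n), 0 <= A i a b)
  (Acomm : forall r s : 'I_N, maxmul (A r) (A s) = maxmul (A s) (A r))
  (Amu : forall i : 'I_N, mu (A i) <= 1)
  (p : nat) (w : p.-tuple 'I_N) :
  exists q : nat, (0 < q)%N /\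
    forall j : nat, (1 <= j <= q)%N ->
      exists Lt : 'I_N -> 'M[R]_n,
        (forall i : 'I_N, mx_cvg (fun k => maxpow (A i) (k * q + j)) (Lt i)) /\
        mx_cvg (fun k => maxpow (word_mat A w) (k * q + j))
               (maxprod_seq [seq maxpow (Lt i) (count_mem i w) | i <- enum 'I_N]).
Proof.
exists n`!; split => [|j _]; first exact: fact_gt0.
pose Lt i := \matrix_(a, b) limn (fun k => maxpow (A i) (k * n`! + j) a b).
have A_cvg i : mx_cvg (fun k => maxpow (A i) (k * n`! + j)) (Lt i).
  by move=> a b; rewrite mxE; exact: maxpow_fact_cvg (Anonneg i) (Amu i) j a b.
exists Lt; split => //.
under [X in mx_cvg X]eq_fun => k do rewrite maxpow_word_mat //.
by apply: mx_cvg_maxprod_seq => i; apply: mx_cvg_maxpow.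
Qed.
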